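(* Let $q$ be a prime power and let $n\ge 3$ be an odd integer. Let $d\in D_n$, let $\beta$ be a primitive $d$-th root of unity over $\mathbb{F}_{q^2}$, and let $f_\beta(x)=\prod_{i=0}^{n-1}(x-\beta^{q^{2i}})$. Then $f_\beta(x)$ is a SCRIM polynomial over $\mathbb{F}_{q^2}$ of degree $n$ and order $d$.
   Context: $D_n$ denotes the set of all positive divisors of $q^n+1$ that do not divide $q^k+1$ for any integer $0\le k<n$. For $f(x)\in\mathbb{F}_{q^2}[x]$ of degree $m$ with $f(0)\neq0$, the reciprocal is $f^*(x)=x^m f(0)^{-1}f(1/x)$, the conjugate of $g(x)=\sum g_ix^i$ is $\overline{g(x)}=\sum g_i^q x^i$, and the conjugate-reciprocal is $f^\dagger(x)=\overline{f^*(x)}$. A polynomial $f$ with $f(0)\ne 0$ is SCRIM if $f=f^\dagger$ and $f$ is irreducible and monic. The order of $f$ is the smallest positive integer $s$ such that $f(x)$ divides $x^s-1$. *)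

From HB Require Import structures.
From mathcomp Require Import all_boot all_order all_algebra all_field.
Set Implicit Arguments. Unset Strict Implicit. Unset Printing Implicit Defensive.
Import GRing.Theory.
Local Open Scope ring_scope.

Definition in_Dn (q n d : nat) : bool :=
  [&& 0 < d, d %| q ^ n + 1 & [forall k : 'I_n, ~~ (d %| q ^ k + 1)]]%N.

Section PolyDefs.
Variable F : fieldType.

(* reciprocal f^*(x) = x^m f(0)^{-1} f(1/x), m = deg f *)
Definition reciprocal (f : {poly F}) : {poly F} :=
  (f`_0)^-1 *: \poly_(i < size f) f`_((size f).-1 - i).

Definition conjp (q : nat) (g : {poly F}) : {poly F} :=
  \poly_(i < size g) (g`_i ^+ q).

Definition conj_reciprocal (q : nat) (f : {poly F}) : {poly F} :=
  conjp q (reciprocal f).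

Definition SCRIM (q : nat) (f : {poly F}) : Prop :=
  [/\ f`_0 != 0, f = conj_reciprocal q f, irreducible_poly f & f \is monic].

Definition poly_order_is (f : {poly F}) (s : nat) : Prop :=
  [/\ (0 < s)%N, f %| 'X^s - 1 &
      forall t : nat, (0 < t)%N -> f %| 'X^t - 1 -> (s <= t)%N].
End PolyDefs.

From HB Require Import structures.
From mathcomp Require Import all_boot all_order all_algebra all_field.
From mathcomp Require Import zify.
Set Implicit Arguments.
Unset Strict Implicit.
Unset Printing Implicit Defensive.

Import GRing.Theory.
Local Open Scope ring_scope.

(* Write beta_t for beta^(q^t).  As d | q^n + 1, beta_n = beta^-1, so t |-> beta_t
   has period 2n.  No smaller period 2g exists: we may take g | n, and n / g is odd,
   so beta_g = beta_n = beta^-1, i.e. d | q^g + 1, which d \in D_n forbids unless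
   g = n.  Hence the n roots beta_(2i) of f_beta are distinct and form one orbit of
   x |-> x^(q^2) = x^#|F|.  So f_beta has its coefficients in F, and it is
   irreducible over F since a factor over F containing one root contains the whole
   orbit.  As n is odd, x |-> (x^-1)^q maps beta_(2i) to beta_(2i+n+1), again a
   root, so f_beta is its own conjugate reciprocal.  Finally f_beta | X^t - 1 iff
   beta^t = 1 iff d | t. *)

Section FrobeniusPow.
Variables (R : comNzRingType) (m : nat) (m_pchar : [pchar R].-nat m).

Definition Frobenius_pow of [pchar R].-nat m := fun x : R => x ^+ m.

Lemma Frobenius_pow_is_nmod_morphism : nmod_morphism (Frobenius_pow m_pchar).
Proof.
split; rewrite /Frobenius_pow; first by rewrite expr0n eqn0Ngt (andP m_pchar).1.
by move=> x y; rewrite exprDn_pchar.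
Qed.

Lemma Frobenius_pow_is_monoid_morphism : monoid_morphism (Frobenius_pow m_pchar).
Proof. by split; rewrite /Frobenius_pow ?expr1n // => x y; rewrite exprMn. Qed.

HB.instance Definition _ := GRing.isNmodMorphism.Build R R (Frobenius_pow m_pchar)
  Frobenius_pow_is_nmod_morphism.
HB.instance Definition _ := GRing.isMonoidMorphism.Build R R (Frobenius_pow m_pchar)
  Frobenius_pow_is_monoid_morphism.

End FrobeniusPow.

Section Reciprocal.
Variable K : fieldType.
Implicit Types a : {poly K}.

Lemma horner_reciprocal a y : y != 0 ->
  (reciprocal a).[y] = (a`_0)^-1 * (y ^+ (size a).-1 * a.[y^-1]).
Proof.
move=> y0; rewrite /reciprocal hornerZ horner_poly; congr (_ * _).
rewrite horner_coef mulr_sumr (reindex_inj rev_ord_inj) /=.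
apply: eq_bigr => i _; have i_lt : (i < size a)%N := ltn_ord i.
have -> : ((size a).-1 - (size a - i.+1) = i)%N by lia.
have -> : ((size a).-1 = (size a - i.+1) + i)%N by lia.
by rewrite exprD exprVn [RHS]mulrC mulrCA divfK ?expf_neq0 // mulrC.
Qed.

Lemma root_reciprocal a y : a`_0 != 0 -> y != 0 ->
  root (reciprocal a) y = root a y^-1.
Proof.
move=> a0 y0; rewrite /root horner_reciprocal // !mulf_eq0 invr_eq0.
by rewrite (negPf a0) expf_eq0 (negPf y0) andbF.
Qed.

Lemma size_reciprocal a : a`_0 != 0 -> size (reciprocal a) = size a.
Proof.
move=> a0; rewrite /reciprocal size_scale ?invr_eq0 //.
by apply: size_poly_eq; rewrite subnn.
Qed.

Lemma reciprocal_monic a : a`_0 != 0 -> reciprocal a \is monic.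
Proof.
move=> a0; have a_gt0 : (0 < size a)%N.
  by rewrite lt0n size_poly_eq0; apply: contraNneq a0 => ->; rewrite coef0.
rewrite monicE /lead_coef size_reciprocal // /reciprocal coefZ coef_poly.
by rewrite prednK // leqnn subnn mulVf.
Qed.

Lemma map_reciprocal (K' : fieldType) (phi : {rmorphism K -> K'}) a :
  map_poly phi (reciprocal a) = reciprocal (map_poly phi a).
Proof.
rewrite /reciprocal map_polyZ fmorphV coef_map size_map_poly; congr (_ *: _).
apply/polyP => i; rewrite coef_map !coef_poly.
case: ltnP => i_lt; rewrite ?raddf0 //.
by have -> : ((size a).-1 - i < size a)%N by lia.
Qed.

Lemma map_conjp (K' : fieldType) (phi : {rmorphism K -> K'}) q a :
  map_poly phi (conjp q a) = conjp q (map_poly phi a).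
Proof.
apply/polyP => i; rewrite coef_map !coef_poly size_map_poly.
case: ltnP => i_lt; rewrite ?raddf0 //; exact: rmorphXn.
Qed.

End Reciprocal.

Lemma dvdp_prod_XsubC_root (K : fieldType) (I : eqType) (r : seq I) (F : I -> K) (h : {poly K}) :
  h %| \prod_(i <- r) ('X - (F i)%:P) -> size h != 1 ->
  exists2 i, i \in r & root h (F i).
Proof.
move=> /dvdp_prod_XsubC[m h_eqp] h_nconst.
case r_m: (mask m r) h_eqp => [|i s] h_eqp.
  by move: h_nconst; rewrite (eqp_size h_eqp) big_nil size_poly1.
exists i; first by apply: (mem_mask (m := m)); rewrite r_m mem_head.
by rewrite (eqp_root h_eqp) big_cons rootM root_XsubC eqxx.
Qed.

Section QConjugates.
Variables (L : fieldType) (q n d : nat) (beta : L).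
Hypotheses (n_odd : odd n) (beta_prim : d.-primitive_root beta) (d_Dn : in_Dn q n d).

Definition betaq t := beta ^+ (q ^ t).

Definition fbeta : {poly L} := \prod_(i < n) ('X - (betaq (2 * i))%:P).

Let n_gt0 : (0 < n)%N := odd_gt0 n_odd.

Lemma betaqD a b : betaq (a + b) = betaq a ^+ (q ^ b).
Proof. by rewrite /betaq expnD exprM. Qed.

Lemma betaq0 : betaq 0 = beta.
Proof. by rewrite /betaq expn0 expr1. Qed.

Lemma beta_neq0 : beta != 0.
Proof.
apply: contra_eqN (prim_expr_order beta_prim) => /eqP->.
by rewrite expr0n gtn_eqF ?(prim_order_gt0 beta_prim) // eq_sym oner_eq0.
Qed.

Lemma betaq_neq0 t : betaq t != 0.
Proof. exact: expf_neq0 beta_neq0. Qed.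

Lemma betaq_eqV t : (betaq t == beta^-1) = (d %| q ^ t + 1)%N.
Proof.
rewrite /betaq (prim_order_dvd beta_prim) addn1 exprSr.
apply/eqP/eqP => [-> | E]; first exact: mulVf beta_neq0.
by rewrite -[LHS]mulr1 -(mulfV beta_neq0) mulrA E mul1r.
Qed.

Lemma betaq_n : betaq n = beta^-1.
Proof. by apply/eqP; rewrite betaq_eqV; case/and3P: d_Dn. Qed.

Lemma betaq_nD t : betaq (n + t) = (betaq t)^-1.
Proof. by rewrite betaqD betaq_n exprVn. Qed.

Lemma betaq_2n : betaq (2 * n) = beta.
Proof. by rewrite mul2n -addnn betaq_nD betaq_n invrK. Qed.

Lemma betaq_period e k t : betaq e = beta -> betaq (k * e + t) = betaq t.
Proof.
move=> betaq_e; elim: k => [|k IHk]; first by rewrite add0n.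
by rewrite mulSn -addnA betaqD betaq_e; exact: IHk.
Qed.

Lemma betaq_gcdn a b : (0 < a)%N -> betaq a = beta -> betaq b = beta ->
  betaq (gcdn a b) = beta.
Proof.
move=> a_gt0 betaq_a betaq_b; have [k _ a_dvd] := Bezoutl b a_gt0.
rewrite -(betaq_period k _ betaq_b) addnC -(divnK a_dvd) -[X in betaq X]addn0.
by rewrite betaq_period // betaq0.
Qed.

Lemma dvdn_betaq_double t : betaq (2 * t) = beta -> (n %| t)%N.
Proof.
move=> betaq_2t; set g := gcdn n t; set c := (n %/ g)%N.
have betaq_2g : betaq (2 * g) = beta.
  by rewrite /g muln_gcdr betaq_gcdn ?muln_gt0 ?betaq_2n.
have g_dvd : (g %| n)%N := dvdn_gcdl n t.
have g_gt0 : (0 < g)%N by rewrite gcdn_gt0 n_gt0.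
have c_odd : odd c by move: n_odd; rewrite -{1}(divnK g_dvd) oddM => /andP[].
have n_split : n = (c./2 * (2 * g) + g)%N.
  by rewrite -{1}(divnK g_dvd) -/c -{1}(odd_double_half c) c_odd; nia.
have : (d %| q ^ g + 1)%N.
  by rewrite -betaq_eqV -(betaq_period c./2 _ betaq_2g) -n_split betaq_n.
case/and3P: d_Dn => _ _ /forallP d_ndvd g_Dn.
have g_n : g = n.
  apply/eqP; rewrite eqn_leq dvdn_leq //= leqNgt; apply/negP => g_lt.
  by have := d_ndvd (Ordinal g_lt); rewrite g_Dn.
by apply/gcdn_idPl.
Qed.

Lemma betaq_double_inj : injective (fun i : 'I_n => betaq (2 * i)).
Proof.
move=> i j; wlog ij : i j / (i <= j)%N.
  by move=> W; case: (leqP i j) => [|/ltnW] h E; [exact: W | apply/esym/W].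
move=> E; apply/val_inj/eqP; rewrite /= eqn_leq ij /=.
have i_lt := ltn_ord i; have j_lt := ltn_ord j.
have : betaq (2 * (j - i)) = beta.
  rewrite -(betaq_period 1 _ betaq_2n).
  have -> : (1 * (2 * n) + 2 * (j - i) = 2 * j + 2 * (n - i))%N by lia.
  by rewrite betaqD /= -E -betaqD -betaq_2n; congr betaq; lia.
move/dvdn_betaq_double/dvdn_leq; lia.
Qed.

Lemma root_fbeta m : root fbeta (betaq (2 * m)).
Proof.
have m_mod : (m %% n < n)%N := ltn_pmod m n_gt0.
rewrite (divn_eq m n) mulnDr mulnA [(2 * _)%N]mulnC -mulnA betaq_period ?betaq_2n //.
by rewrite /fbeta (bigD1 (Ordinal m_mod)) //= rootM root_XsubC eqxx.
Qed.

Lemma fbeta_coef0 : fbeta`_0 != 0.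
Proof.
rewrite -horner_coef0 horner_prod prodf_seq_neq0; apply/allP => i _.
by rewrite hornerXsubC sub0r oppr_eq0 betaq_neq0.
Qed.

Lemma fbetaE : fbeta = \prod_(z <- [seq betaq (2 * i) | i : 'I_n]) ('X - z%:P).
Proof. by rewrite big_image. Qed.

Lemma size_fbeta : size fbeta = n.+1.
Proof. by rewrite fbetaE size_prod_XsubC size_map size_enum_ord. Qed.

Lemma monic_fbeta : fbeta \is monic.
Proof. exact: monic_prod_XsubC. Qed.

Lemma fbeta_dvdp h : (forall m, root h (betaq (2 * m))) -> fbeta %| h.
Proof.
move=> h_roots; rewrite fbetaE.
have [||h' ->] := @uniq_roots_prod_XsubC _ h [seq betaq (2 * i) | i : 'I_n].
- by apply/allP => _ /mapP[i _ ->].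
- by rewrite uniq_rootsE map_inj_uniq ?enum_uniq //; exact: betaq_double_inj.
by rewrite dvdp_mull.
Qed.

Lemma fbeta_unique h : h \is monic -> size h = n.+1 ->
  (forall m, root h (betaq (2 * m))) -> h = fbeta.
Proof.
move=> h_monic h_size h_roots; apply/esym/eqP.
by rewrite -eqp_monic ?monic_fbeta // -dvdp_size_eqp ?fbeta_dvdp // size_fbeta h_size.
Qed.

Lemma fbeta_dvdp_Xn_sub1 t : (fbeta %| 'X^t - 1) = (d %| t)%N.
Proof.
apply/idP/idP => [|d_dvd].
  move/root_dvdp/(_ (root_fbeta 0)); rewrite muln0 betaq0.
  by rewrite /root !hornerE subr_eq0 -(prim_order_dvd beta_prim).
apply: fbeta_dvdp => m; rewrite /root !hornerE subr_eq0 /betaq -exprM mulnC exprM.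
by move: d_dvd; rewrite (prim_order_dvd beta_prim) => /eqP->; rewrite expr1n.
Qed.

Section Frobenius.
Hypothesis q_pchar : [pchar L].-nat q.

Let q2_pchar : [pchar L].-nat (q ^ 2)%N.
Proof. by rewrite pnatX q_pchar. Qed.

Lemma fbeta_coef_frobenius i : fbeta`_i ^+ (q ^ 2) = fbeta`_i.
Proof.
have frob_fbeta : map_poly (Frobenius_pow q2_pchar) fbeta = fbeta.
  apply: fbeta_unique => [||m]; first by rewrite map_monic monic_fbeta.
    by rewrite size_map_poly size_fbeta.
  have -> : betaq (2 * m) = Frobenius_pow q2_pchar (betaq (2 * (m + n.-1))).
    by rewrite /Frobenius_pow -betaqD -(betaq_period 1 _ betaq_2n); congr betaq; lia.
  by rewrite fmorph_root root_fbeta.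
by rewrite -[in RHS]frob_fbeta coef_map.
Qed.

Lemma fbeta_dvdp_of_frobenius_fixed (h : {poly L}) j :
    (forall i, h`_i ^+ (q ^ 2) = h`_i) -> root h (betaq (2 * j)) -> fbeta %| h.
Proof.
move=> h_fixed h_root.
have frob_h : map_poly (Frobenius_pow q2_pchar) h = h.
  by apply/polyP => i; rewrite coef_map; exact: h_fixed.
have h_roots_from_j k : root h (betaq (2 * j + 2 * k)).
  elim: k => [|k IHk]; first by rewrite addn0.
  have -> : (2 * j + 2 * k.+1 = 2 * j + 2 * k + 2)%N by lia.
  by rewrite betaqD -frob_h (fmorph_root (Frobenius_pow q2_pchar)).
apply: fbeta_dvdp => m; rewrite -(betaq_period j _ betaq_2n).
have -> : (j * (2 * n) + 2 * m = 2 * j + 2 * (m + j * n.-1))%N by nia.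
exact: h_roots_from_j.
Qed.

Lemma fbeta_conj_reciprocal : fbeta = conj_reciprocal q fbeta.
Proof.
apply/esym; change (map_poly (Frobenius_pow q_pchar) (reciprocal fbeta) = fbeta).
apply: fbeta_unique => [||m]; first by rewrite map_monic reciprocal_monic ?fbeta_coef0.
  by rewrite size_map_poly size_reciprocal ?fbeta_coef0 ?size_fbeta.
pose y := betaq (2 * (m + n) - 1).
have -> : betaq (2 * m) = Frobenius_pow q_pchar y.
  rewrite /Frobenius_pow -[X in _ = _ ^+ X]expn1 -betaqD.
  by rewrite -(betaq_period 1 _ betaq_2n); congr betaq; lia.
rewrite fmorph_root root_reciprocal ?fbeta_coef0 ?betaq_neq0 // -betaq_nD.
have -> : (n + (2 * (m + n) - 1) = 2 * (m + n + n./2))%N.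
  by move: (odd_double_half n); rewrite n_odd; lia.
exact: root_fbeta.
Qed.

End Frobenius.

End QConjugates.

Section OverFiniteField.
Variables (F : finFieldType) (L : fieldExtType F) (q n d : nat) (beta : L).
Hypotheses (cardF : #|F| = (q ^ 2)%N) (q_pchar : [pchar L].-nat q)
  (n_odd : odd n) (beta_prim : d.-primitive_root beta) (d_Dn : in_Dn q n d).

Local Notation fbeta := (fbeta q n beta).

Lemma fbeta_polyOver1 : fbeta \is a polyOver 1%VS.
Proof.
apply/polyOverP => i; rewrite (Fermat's_little_theorem 1%AS) dimv1 expn1 cardF.
by rewrite (fbeta_coef_frobenius n_odd beta_prim d_Dn q_pchar).
Qed.

Variable g : {poly F}.
Hypothesis g_fbeta : map_poly (in_alg L) g = fbeta.

Lemma fbetaF_coef0 : g`_0 != 0.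
Proof.
by rewrite -(fmorph_eq0 (in_alg L)) -coef_map g_fbeta (fbeta_coef0 q n beta_prim).
Qed.

Lemma fbetaF_monic : g \is monic.
Proof. by rewrite -(map_monic (in_alg L)) g_fbeta monic_fbeta. Qed.

Lemma fbetaF_size : size g = n.+1.
Proof. by rewrite -(size_map_poly (in_alg L)) g_fbeta size_fbeta. Qed.

Lemma fbetaF_conj_reciprocal : g = conj_reciprocal q g.
Proof.
apply: (@map_poly_inj _ _ (in_alg L)).
rewrite map_conjp map_reciprocal g_fbeta.
exact: fbeta_conj_reciprocal n_odd beta_prim d_Dn q_pchar.
Qed.

Lemma fbetaF_irreducible : irreducible_poly g.
Proof.
split=> [|h h_nconst h_dvd]; first by rewrite fbetaF_size ltnS odd_gt0.
have hL_dvd : map_poly (in_alg L) h %| fbeta by rewrite -g_fbeta dvdp_map.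
have hL_nconst : size (map_poly (in_alg L) h) != 1 by rewrite size_map_poly.
have [j _ hL_root] := dvdp_prod_XsubC_root hL_dvd hL_nconst.
have hL_fixed i : (map_poly (in_alg L) h)`_i ^+ (q ^ 2) = (map_poly (in_alg L) h)`_i.
  by rewrite coef_map -rmorphXn -cardF expf_card.
rewrite -(eqp_map (in_alg L)) g_fbeta /eqp hL_dvd.
exact: fbeta_dvdp_of_frobenius_fixed n_odd beta_prim d_Dn q_pchar _ _ hL_fixed hL_root.
Qed.

Lemma fbetaF_SCRIM : SCRIM q g.
Proof.
split; [exact: fbetaF_coef0 | exact: fbetaF_conj_reciprocal |
        exact: fbetaF_irreducible | exact: fbetaF_monic].
Qed.

Lemma fbetaF_order : poly_order_is g d.
Proof.
have dvd_Xn_sub1 t : (g %| 'X^t - 1) = (d %| t)%N.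
  rewrite -(dvdp_map (in_alg L)) rmorphB /= map_polyXn rmorph1 g_fbeta.
  exact: fbeta_dvdp_Xn_sub1 n_odd beta_prim d_Dn t.
split=> [|| t t_gt0]; first exact: prim_order_gt0 beta_prim.
  by rewrite dvd_Xn_sub1.
by rewrite dvd_Xn_sub1; exact: dvdn_leq.
Qed.

End OverFiniteField.

Theorem mainTheorem8
  (q : nat) (Hq : exists p k : nat, prime p /\ (0 < k)%N /\ q = (p ^ k)%N)
  (F : finFieldType) (HF : #|F| = (q ^ 2)%N)
  (L : fieldExtType F)
  (n : nat) (Hn3 : (3 <= n)%N) (Hnodd : odd n)
  (d : nat) (Hd : in_Dn q n d)
  (beta : L) (Hbeta : d.-primitive_root beta) :
  let f_beta : {poly L} :=
    \prod_(i < n) ('X - (beta ^+ (q ^ (2 * i)))%:P) in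
  exists g : {poly F},
    [/\ map_poly (in_alg L) g = f_beta,
        SCRIM q g,
        size g = n.+1
      & poly_order_is g d].
Proof.
move=> f_beta.
have q_pchar : [pchar L].-nat q.
  have [p [k [p_prime [_ q_pk]]]] := Hq.
  have p_char : p \in [pchar F].
    by apply: (@card_finPcharP _ _ (k * 2)); rewrite // HF q_pk -expnM.
  by rewrite q_pk (eq_pnat _ (pchar_lalg L)) (eq_pnat _ (pcharf_eq p_char)) pnatX pnat_id.
have [g /esym g_fbeta] := polyOver1P (fbeta_polyOver1 HF q_pchar Hnodd Hbeta Hd).
exists g; split=> //.
- exact (fbetaF_SCRIM HF q_pchar Hnodd Hbeta Hd g_fbeta).
- exact (fbetaF_size g_fbeta).
- exact (fbetaF_order Hnodd Hbeta Hd g_fbeta).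
Qed.
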